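(* Let $\kappa>0$ and $\delta_s=\kappa\sqrt s$. For $0\le s\le t<1/\kappa^2$ and $x\in\mathbb R$ define $\phi_{s|t}(x)=\frac{1-\delta_s}{1-\delta_t}x$ if $x\in[\delta_t-1,1-\delta_t]$; $\phi_{s|t}(x)=\sqrt{s/t}\,x-(1-\sqrt{s/t})$ if $x\le\delta_t-1$; $\phi_{s|t}(x)=\sqrt{s/t}\,x+(1-\sqrt{s/t})$ if $x\ge1-\delta_t$. Then for every $t\in(0,1/\kappa^2)$ and $x\in\mathbb R$, the map $s\mapsto x_s:=\phi_{s|t}(x)$ is continuous on $[0,t]$, satisfies $x_t=x$, and solves $\frac{d}{ds}x_s=-\frac12\hat s_{s,\delta_s}(x_s)$ for all $s\in(0,t)$; moreover the trajectory stays in the same region ($x_s\le\delta_s-1$, $x_s\ge1-\delta_s$, or $x_s\in[\delta_s-1,1-\delta_s]$, respectively) for all $s\in(0,t]$. In particular $\phi_{0|t}(x)=x/(1-\delta_t)$ if $x\in[\delta_t-1,1-\delta_t]$ and $\phi_{0|t}(x)=\mathrm{sgn}(x)$ otherwise.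
   Context: Smoothed PL-ESF (training set $\{-1,1\}$), for $\delta\in(0,1)$ and $t>0$: $\hat s_{t,\delta}(x)=-(x+1)/t$ if $x\le\delta-1$; $-(x-1)/t$ if $x\ge1-\delta$; $\frac{\delta}{1-\delta}\cdot\frac xt$ if $x\in(\delta-1,1-\delta)$. *)

From HB Require Import structures.
From mathcomp Require Import all_boot all_order all_algebra.
From mathcomp Require Import all_classical all_reals all_analysis.
Set Implicit Arguments. Unset Strict Implicit. Unset Printing Implicit Defensive.
Import Order.TTheory GRing.Theory Num.Theory.
Import numFieldNormedType.Exports.
Local Open Scope ring_scope.

(* Smoothed PL-ESF \hat s_{t,delta}(x) (training set {-1,1}). *)
Definition shat {R : realType} (t delta x : R) : R :=
  if x <= delta - 1 then - (x + 1) / t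
  else if 1 - delta <= x then - (x - 1) / t
  else delta / (1 - delta) * (x / t).

Definition dlt {R : realType} (kappa s : R) : R := kappa * Num.sqrt s.

(* phi_{s|t}(x); the three cases agree on the overlapping boundary points. *)
Definition phi {R : realType} (kappa s t x : R) : R :=
  if x <= dlt kappa t - 1 then Num.sqrt (s / t) * x - (1 - Num.sqrt (s / t))
  else if 1 - dlt kappa t <= x then Num.sqrt (s / t) * x + (1 - Num.sqrt (s / t))
  else (1 - dlt kappa s) / (1 - dlt kappa t) * x.

From HB Require Import structures.
From mathcomp Require Import all_boot all_order all_algebra.
From mathcomp Require Import all_classical all_reals all_analysis.
From mathcomp Require Import ring lra.
Import Order.TTheory GRing.Theory Num.Theory.
Import numFieldNormedType.Exports.
Local Open Scope classical_set_scope.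
Local Open Scope ring_scope.

(* Since [dlt kappa s = sqrt (s / t) * dlt kappa t], every branch of [phi] is affine
   in [q = sqrt (s / t)] and equals [x] at [q = 1]: the trajectory is
   [x_s = x_0 + sqrt (s / t) * (x - x_0)] with [x_0 = phi_{0|t}(x)].  Being affine in
   [sqrt s], it is continuous with derivative [(x - x_0) / (2 sqrt t sqrt s)].  The same
   scaling keeps [x_s] in the region of [x], where the smoothed score evaluates to
   [(x_0 - x) / (sqrt t sqrt s)], which is the ODE. *)

Lemma sqrtr_div {R : rcfType} (u t : R) : 0 < t ->
  Num.sqrt (u / t) = Num.sqrt u / Num.sqrt t.
Proof.
move=> t_gt0; have [u_ge0|u_lt0] := leP 0 u.
  by rewrite sqrtrM // sqrtrV // ltW.
rewrite (ltr0_sqrtr u_lt0) mul0r ltr0_sqrtr //.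
by rewrite pmulr_llt0 ?invr_gt0.
Qed.

Lemma continuous_sqrt_affine {R : realType} (a b : R) :
  continuous (fun u : R => a + b * Num.sqrt u).
Proof.
move=> u; apply: cvgD; first exact: cvg_cst.
by apply: cvgM; [exact: cvg_cst | exact: sqrt_continuous].
Qed.

Lemma is_derive_sqrt_affine {R : realType} (a b s : R) : 0 < s ->
  is_derive s 1 (fun u : R => a + b * Num.sqrt u) (b / (2 * Num.sqrt s)).
Proof.
move=> s_gt0; have ? := is_derive1_sqrt s_gt0.
by apply: is_derive_eq; rewrite add0r mul1r.
Qed.

Section Trajectory.
Variables (R : realType) (kappa t : R).
Hypotheses (kappa_gt0 : 0 < kappa) (t_gt0 : 0 < t) (t_lt : t < 1 / kappa ^+ 2).

Lemma dlt_ge0 s : 0 <= dlt kappa s.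
Proof. by rewrite /dlt mulr_ge0 ?sqrtr_ge0 ?ltW. Qed.

Lemma dlt_le {s} : s <= t -> dlt kappa s <= dlt kappa t.
Proof. by move=> st; rewrite ler_pM2l // ler_sqrt // ltW. Qed.

Lemma dlt_lt1 {s} : s <= t -> dlt kappa s < 1.
Proof.
move=> st; apply: le_lt_trans (dlt_le st) _.
have : dlt kappa t ^+ 2 < 1.
  by rewrite exprMn sqr_sqrtr ?ltW // mulrC -ltr_pdivlMr ?exprn_gt0.
by rewrite expr_lt1 ?dlt_ge0.
Qed.

Lemma onem_dlt_neq0 : 1 - dlt kappa t != 0.
Proof. by rewrite subr_eq0 eq_sym lt_eqF // dlt_lt1. Qed.

Lemma dlt_scale u : dlt kappa u = Num.sqrt (u / t) * dlt kappa t.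
Proof. by rewrite /dlt sqrtr_div // mulrCA divfK // gt_eqF // sqrtr_gt0. Qed.

Lemma phi0E x : phi kappa 0 t x =
  if x <= dlt kappa t - 1 then -1
  else if 1 - dlt kappa t <= x then 1 else x / (1 - dlt kappa t).
Proof.
have dlt0 : dlt kappa 0 = 0 by rewrite /dlt sqrtr0 mulr0.
rewrite /phi dlt0 mul0r sqrtr0 mul0r subr0 !add0r.
by case: ifP => // _; case: ifP => // _; rewrite mulrC mul1r.
Qed.

Lemma phi_interp x u :
  phi kappa u t x = phi kappa 0 t x + Num.sqrt (u / t) * (x - phi kappa 0 t x).
Proof.
have := onem_dlt_neq0; rewrite phi0E /phi (dlt_scale u).
by case: ifP => _ ?; [ring | case: ifP => _; [ring | field]].
Qed.

Lemma phi_sqrt_affine x : (fun u => phi kappa u t x) =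
  (fun u => phi kappa 0 t x + (x - phi kappa 0 t x) / Num.sqrt t * Num.sqrt u).
Proof. by apply/funext => u; rewrite phi_interp sqrtr_div //; ring. Qed.

Lemma phi_tt x : phi kappa t t x = x.
Proof. by rewrite phi_interp divff ?gt_eqF // sqrtr1 mul1r addrC subrK. Qed.

Lemma phi0_middle x : dlt kappa t - 1 <= x <= 1 - dlt kappa t ->
  phi kappa 0 t x = x / (1 - dlt kappa t).
Proof.
move=> /andP[lo hi]; have := onem_dlt_neq0.
rewrite phi0E; case: ifP => [x_le|_].
  have -> : x = dlt kappa t - 1 by apply/eqP; rewrite eq_le x_le lo.
  by move=> ?; field.
case: ifP => // x_ge.
have -> : x = 1 - dlt kappa t by apply/eqP; rewrite eq_le x_ge hi.
by move=> ?; rewrite divff.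
Qed.

Lemma phi0_outside x : ~~ (dlt kappa t - 1 <= x <= 1 - dlt kappa t) ->
  phi kappa 0 t x = Num.sg x.
Proof.
have d_lt1 := dlt_lt1 (lexx t); rewrite negb_and -!ltNge phi0E => /orP[x_lt|x_gt].
  by rewrite ifT ?ltW // ltr0_sg //; lra.
have x_not_lower : (x <= dlt kappa t - 1) = false by apply/negbTE; rewrite -ltNge; lra.
by rewrite x_not_lower ifT ?ltW // gtr0_sg //; lra.
Qed.

Lemma phi_middleE x s : dlt kappa t - 1 <= x <= 1 - dlt kappa t ->
  phi kappa s t x = (1 - dlt kappa s) * (x / (1 - dlt kappa t)).
Proof.
move=> x_mid; have := onem_dlt_neq0.
by rewrite phi_interp phi0_middle // (dlt_scale s) => ?; field.
Qed.

Lemma phi_lower x s : x <= dlt kappa t - 1 -> phi kappa s t x <= dlt kappa s - 1.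
Proof.
move=> x_le; have q_ge0 : 0 <= Num.sqrt (s / t) := sqrtr_ge0 _.
rewrite phi_interp phi0E ifT // (dlt_scale s); nra.
Qed.

Lemma phi_upper x s : 1 - dlt kappa t <= x -> 1 - dlt kappa s <= phi kappa s t x.
Proof.
move=> x_ge; have q_ge0 : 0 <= Num.sqrt (s / t) := sqrtr_ge0 _.
have d_lt1 := dlt_lt1 (lexx t).
rewrite phi_interp phi0E ifF ?ifT //; last by apply/negbTE; rewrite -ltNge; lra.
rewrite (dlt_scale s); nra.
Qed.

Lemma phi_middle x s : s <= t -> dlt kappa t - 1 <= x <= 1 - dlt kappa t ->
  dlt kappa s - 1 <= phi kappa s t x <= 1 - dlt kappa s.
Proof.
move=> st x_mid; have ds_lt1 := dlt_lt1 st; have d_lt1 := dlt_lt1 (lexx t).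
have /andP[lo hi] : -1 <= x / (1 - dlt kappa t) <= 1.
  by rewrite ler_pdivlMr ?ler_pdivrMr ?subr_gt0 //; lra.
rewrite phi_middleE //; apply/andP; split; nra.
Qed.

Lemma shat_phi x s : 0 < s <= t ->
  shat s (dlt kappa s) (phi kappa s t x) =
  (phi kappa 0 t x - x) / (Num.sqrt t * Num.sqrt s).
Proof.
move=> /andP[s_gt0 st]; have ds_lt1 := dlt_lt1 st; have d_lt1 := dlt_lt1 (lexx t).
have r_gt0 : 0 < Num.sqrt s by rewrite sqrtr_gt0.
have tau_gt0 : 0 < Num.sqrt t by rewrite sqrtr_gt0.
have sE : s = Num.sqrt s ^+ 2 by rewrite sqr_sqrtr // ltW.
rewrite /shat.
have [x_low | x_not_low] := leP x (dlt kappa t - 1).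
  rewrite ifT ?phi_lower // phi_interp phi0E ifT // sqrtr_div //.
  set r := Num.sqrt s in r_gt0 sE *.
  rewrite [in X in _ / X = _]sE; field; rewrite !gt_eqF //.
have [x_up | x_not_up] := leP (1 - dlt kappa t) x.
  have xs_up := phi_upper x s x_up.

  rewrite ifF; last by apply/negbTE; rewrite -ltNge; lra.
  rewrite ifT // phi_interp phi0E ifF ?ifT //; last by apply/negbTE; rewrite -ltNge.
  rewrite sqrtr_div //; set r := Num.sqrt s in r_gt0 sE *.
  rewrite [in X in _ / X = _]sE; field; rewrite !gt_eqF //.
have x_mid : dlt kappa t - 1 <= x <= 1 - dlt kappa t by rewrite !ltW.
have /andP[lo hi] : -1 < x / (1 - dlt kappa t) < 1.
  by rewrite ltr_pdivlMr ?ltr_pdivrMr ?subr_gt0 //; lra.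
rewrite phi_middleE // ifF ?ifF; first last.
- by apply/negbTE; rewrite -ltNge; nra.
- by apply/negbTE; rewrite -ltNge; nra.
rewrite phi0_middle // /dlt in d_lt1 ds_lt1 *.
set r := Num.sqrt s in r_gt0 sE ds_lt1 *.
rewrite [in X in _ * (_ / X) = _]sE; field.
by rewrite !gt_eqF ?subr_gt0.
Qed.

End Trajectory.

Theorem mainTheorem5 (R : realType) (kappa t x : R) :
  0 < kappa -> 0 < t -> t < 1 / kappa ^+ 2 ->
  {within `[0, t], continuous (fun s => phi kappa s t x)} /\
      phi kappa t t x = x /\
      (forall s, 0 < s < t ->
         is_derive s (1 : R) (fun u => phi kappa u t x)
           (- (1 / 2) * shat s (dlt kappa s) (phi kappa s t x))) /\
      (x <= dlt kappa t - 1 ->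
         forall s, 0 < s <= t -> phi kappa s t x <= dlt kappa s - 1) /\
      (1 - dlt kappa t <= x ->
         forall s, 0 < s <= t -> 1 - dlt kappa s <= phi kappa s t x) /\
      (dlt kappa t - 1 <= x <= 1 - dlt kappa t ->
         forall s, 0 < s <= t ->
           dlt kappa s - 1 <= phi kappa s t x <= 1 - dlt kappa s) /\
      ((dlt kappa t - 1 <= x <= 1 - dlt kappa t ->
          phi kappa 0 t x = x / (1 - dlt kappa t)) /\
       (~~ (dlt kappa t - 1 <= x <= 1 - dlt kappa t) ->
          phi kappa 0 t x = Num.sg x)).
Proof.
move=> kappa_gt0 t_gt0 t_lt.
split.
  rewrite phi_sqrt_affine //; apply: continuous_subspaceT.
  exact: continuous_sqrt_affine.
split; first exact: phi_tt.
split.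
  move=> s /andP[s_gt0 /ltW s_le_t]; rewrite phi_sqrt_affine //.
  apply: is_derive_eq (is_derive_sqrt_affine _ _ _ s_gt0) _.
  rewrite shat_phi ?s_gt0 //; field.
  by rewrite !gt_eqF ?sqrtr_gt0.
split; first by move=> x_low s _; exact: phi_lower.
split; first by move=> x_up s _; exact: phi_upper.
split; first by move=> x_mid s /andP[_ s_le_t]; exact: phi_middle.
by split; [exact: phi0_middle | exact: phi0_outside].
Qed.
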